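(* Let $f\in\mathbb{Z}[x,y]$ be square-free without non-constant factors in $\mathbb{Z}[x]$, $C=V(f)$, $R(x)=\operatorname{res}(f,f_y,y)$. Let $\alpha$ be a real root of $R$, $\alpha'$ the next larger real root of $R$ (or $+\infty$), $I=(\alpha,\alpha')$, and let $\varphi_1<\cdots<\varphi_{m_I}$ be the continuous functions on $I$ whose graphs form $C\cap(I\times\mathbb{R})$. Let $y_1<\cdots<y_{m_\alpha}$ be the real roots of $f(\alpha,y)$ and let $t_1<y_1<t_2<\cdots<y_{m_\alpha}<t_{m_\alpha+1}$ be rational numbers. Let $b\in I$ be rational such that $f(x,t_i)\neq 0$ for all $x\in[\alpha,b]$ and all $i=1,\ldots,m_\alpha+1$. Let $\gamma_j:=\varphi_j(b)$ be the $j$-th real root of $f(b,y)$. If $t_{i_0}<\gamma_j<t_{i_0+1}$ for some $i_0\in\{1,\ldots,m_\alpha\}$, then $\lim_{x\to\alpha^+}\varphi_j(x)=y_{i_0}$. If $\gamma_j<t_1$ (resp. $\gamma_j>t_{m_\alpha+1}$), then $\varphi_j(x)\to-\infty$ (resp. $+\infty$) as $x\to\alpha^+$.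
   Context: $\operatorname{res}(\cdot,\cdot,y)$ denotes the resultant with respect to $y$. The functions $\varphi_j$ exist by delineability of $C$ over intervals between consecutive real roots of $R$; each arc of $C$ over $I$ either tends to a real root of $f(\alpha,y)$ or to $\pm\infty$ as $x\to\alpha^+$. *)

From HB Require Import structures.
From mathcomp Require Import all_boot all_order all_algebra.
From Stdlib Require Import Reals QArith.

Set Implicit Arguments.
Unset Strict Implicit.
Unset Printing Implicit Defensive.

Definition int2R (z : int) : R :=
  match z with
  | Posz n => INR n
  | Negz n => (- INR (S n))%R
  end.

Definition peval (p : {poly int}) (x : R) : R :=
  foldr (fun c acc => (int2R c + x * acc)%R) 0%R (polyseq p).

(* f in Z[x][y] = Z[x,y]: the outer variable is y, coefficients are in Z[x].
   peval2 f x y = f(x, y). *)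
Definition peval2 (f : {poly {poly int}}) (x y : R) : R :=
  foldr (fun c acc => (peval c x + y * acc)%R) 0%R (polyseq f).

Definition resY (f : {poly {poly int}}) : {poly int} := resultant f (deriv f).

Definition squarefreeXY (f : {poly {poly int}}) : Prop :=
  forall g h : {poly {poly int}}, f = GRing.mul (GRing.mul g g) h -> g \is a GRing.unit.

Definition no_Zx_factor (f : {poly {poly int}}) : Prop :=
  forall (g : {poly int}) (h : {poly {poly int}}),
    f = GRing.mul (polyC g) h -> leq (size g) 1.

(* The open interval I = (alpha, alpha') where alpha' is the next larger real
   root of Rp (or +infinity). *)
Definition inI (Rp : {poly int}) (alpha x : R) : Prop :=
  (alpha < x)%R /\ forall r : R, (alpha < r <= x)%R -> peval Rp r <> 0%R.

From HB Require Import structures.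
From mathcomp Require Import all_boot all_order all_algebra.
From Stdlib Require Import Reals QArith Lra.
From mathcomp Require Import zify.

Set Implicit Arguments.
Unset Strict Implicit.
Unset Printing Implicit Defensive.

(* The arc phi_j is continuous on (alpha, b] and never meets the horizontal
   lines y = t_i there (f(x, t_i) <> 0), so by the intermediate value theorem
   it stays in the horizontal strip containing gamma_j = phi_j(b).  On the
   other hand, a compact segment {alpha} x [a, c] free of zeros of f has a
   zero-free neighbourhood (alpha, alpha + d) x [a, c], because f is
   Lipschitz in x uniformly on bounded sets.  If the strip is (t_i0, t_i0+1),
   its only root at x = alpha is y_i0, so the arc is eventually pushed out
   of [t_i0, y_i0 - eps] and of [y_i0 + eps, t_i0+1]; if the strip is
   unbounded, the arc is pushed beyond every level M. *)

Local Open Scope R_scope.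

Definition horner_int (s : seq int) (x : R) : R :=
  foldr (fun c acc => int2R c + x * acc) 0 s.

Definition horner2 (s : seq {poly int}) (x y : R) : R :=
  foldr (fun c acc => peval c x + y * acc) 0 s.

Lemma Rabs_bounds u : - Rabs u <= u <= Rabs u.
Proof. by unfold Rabs; destruct (Rcase_abs u); lra. Qed.

Lemma horner_int_bounded s B : 0 <= B ->
  exists K, forall a, Rabs a <= B -> Rabs (horner_int s a) <= K.
Proof.
move=> HB; elim: s => [|c s [K IH]].
  by exists 0 => a _; rewrite /= Rabs_R0; lra.
exists (Rabs (int2R c) + B * K) => a Ha.
have HK : 0 <= K by apply: Rle_trans (IH 0 _); [apply Rabs_pos | rewrite Rabs_R0].
change (Rabs (int2R c + a * horner_int s a) <= Rabs (int2R c) + B * K).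
have := Rabs_triang (int2R c) (a * horner_int s a); rewrite Rabs_mult.
have : Rabs a * Rabs (horner_int s a) <= B * K.
  by apply Rmult_le_compat; [apply Rabs_pos | apply Rabs_pos | exact Ha | exact: IH].
lra.
Qed.

Lemma horner_int_lipschitz s B : 0 <= B -> exists L, 0 <= L /\ forall x a,
  Rabs x <= B -> Rabs a <= B ->
  Rabs (horner_int s x - horner_int s a) <= L * Rabs (x - a).
Proof.
move=> HB; elim: s => [|c s [L [HL IH]]].
  by exists 0; split; [lra|] => x a _ _; rewrite /= Rminus_0_r Rabs_R0; lra.
have [K HK] := horner_int_bounded s HB.
have HK0 : 0 <= K by apply: Rle_trans (HK 0 _); [apply Rabs_pos | rewrite Rabs_R0].
exists (B * L + K); split; first by nra.
move=> x a Hx Ha.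
change (Rabs ((int2R c + x * horner_int s x) - (int2R c + a * horner_int s a))
        <= (B * L + K) * Rabs (x - a)).
replace ((int2R c + x * horner_int s x) - (int2R c + a * horner_int s a)) with
  (x * (horner_int s x - horner_int s a) + (x - a) * horner_int s a) by ring.
have := Rabs_triang (x * (horner_int s x - horner_int s a)) ((x - a) * horner_int s a).
rewrite !Rabs_mult.
have : Rabs x * Rabs (horner_int s x - horner_int s a) <= B * (L * Rabs (x - a)).
  by apply Rmult_le_compat; [apply Rabs_pos | apply Rabs_pos | exact Hx | exact: IH].
have : Rabs (x - a) * Rabs (horner_int s a) <= Rabs (x - a) * K.
  by apply Rmult_le_compat_l; [apply Rabs_pos | exact: HK].
have := Rabs_pos (x - a).
nra.
Qed.

Lemma horner2_lipschitz_x s B : 0 <= B -> exists L, 0 <= L /\ forall x a y,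
  Rabs x <= B -> Rabs a <= B -> Rabs y <= B ->
  Rabs (horner2 s x y - horner2 s a y) <= L * Rabs (x - a).
Proof.
move=> HB; elim: s => [|c s [L [HL IH]]].
  by exists 0; split; [lra|] => x a y _ _ _; rewrite /= Rminus_0_r Rabs_R0; lra.
have [Lc [HLc Hc]] := horner_int_lipschitz (polyseq c) HB.
exists (Lc + B * L); split; first by nra.
move=> x a y Hx Ha Hy.
change (Rabs ((peval c x + y * horner2 s x y) - (peval c a + y * horner2 s a y))
        <= (Lc + B * L) * Rabs (x - a)).
replace ((peval c x + y * horner2 s x y) - (peval c a + y * horner2 s a y)) with
  ((peval c x - peval c a) + y * (horner2 s x y - horner2 s a y)) by ring.
have := Rabs_triang (peval c x - peval c a) (y * (horner2 s x y - horner2 s a y)).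
rewrite Rabs_mult.
have : Rabs y * Rabs (horner2 s x y - horner2 s a y) <= B * (L * Rabs (x - a)).
  by apply Rmult_le_compat; [apply Rabs_pos | apply Rabs_pos | exact Hy | exact: IH].
have := Hc x a Hx Ha; have := Rabs_pos (x - a).
rewrite /peval -/(horner_int (polyseq c) x) -/(horner_int (polyseq c) a).
nra.
Qed.

Lemma horner2_continuous_y s x : continuity (horner2 s x).
Proof.
elim: s => [|c s IH]; first by apply continuity_const => ? ?.
change (continuity (plus_fct (fct_cte (peval c x)) (mult_fct id (horner2 s x)))).
apply continuity_plus; first by apply continuity_const => ? ?.
by apply continuity_mult => //; apply derivable_continuous, derivable_id.
Qed.

(* If f(alpha, .) has no zero on [a, c], then f has no zero on
   (alpha, alpha + d) x [a, c] for some d > 0: the minimum m of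
   |f(alpha, .)| on [a, c] is positive and f moves by less than m when x
   moves by less than m / (L + 1). *)
Lemma zero_free_neighbourhood (f : {poly {poly int}}) alpha a c :
  (forall y, a <= y <= c -> peval2 f alpha y <> 0) ->
  exists d, 0 < d /\ forall x y, alpha < x < alpha + d -> a <= y <= c ->
    peval2 f x y <> 0.
Proof.
move=> Hzf.
have Heval : forall x y, peval2 f x y = horner2 (polyseq f) x y by [].
have [Hac|Hca] := Rle_lt_dec a c; last by exists 1; split=> [|x y _ Hy]; lra.
pose g y := Rabs (peval2 f alpha y).
have [ymin [Hmin Hymin]] : exists ymin,
    (forall y, a <= y <= c -> g ymin <= g y) /\ a <= ymin <= c.
  apply: continuity_ab_min => // y _.
  apply: continuity_pt_comp; last exact: Rcontinuity_abs.
  exact: horner2_continuous_y.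
have Hm : 0 < g ymin by apply: Rabs_pos_lt; exact: Hzf.
pose B := Rabs alpha + 1 + Rabs a + Rabs c.
have HB : 0 <= B.
  by have := Rabs_pos alpha; have := Rabs_pos a; have := Rabs_pos c; rewrite /B; lra.
have [L [HL Hlip]] := horner2_lipschitz_x (polyseq f) HB.
pose d := Rmin 1 (g ymin / (L + 1)).
have Hd1 : d <= 1 := Rmin_l _ _.
have Hd2 : d <= g ymin / (L + 1) := Rmin_r _ _.
exists d; split; first by apply: Rmin_glb_lt; [lra | apply: Rdiv_lt_0_compat; lra].
move=> x y [Hx1 Hx2] Hy Hzero.
have := Rabs_bounds alpha; have := Rabs_bounds a; have := Rabs_bounds c => Hc Ha Hal.
have Hxb : Rabs x <= B by apply: Rabs_le; rewrite /B; lra.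
have Hab : Rabs alpha <= B by apply: Rabs_le; rewrite /B; lra.
have Hyb : Rabs y <= B by apply: Rabs_le; rewrite /B; lra.
have Hmove := Hlip x alpha y Hxb Hab Hyb.
rewrite -!Heval Hzero Rminus_0_l Rabs_Ropp (Rabs_right (x - alpha)) in Hmove; last lra.
have Hgy := Hmin y Hy; rewrite /g in Hgy Hm.
have Hsmall : (x - alpha) * (L + 1) < g ymin.
  replace (g ymin) with (g ymin / (L + 1) * (L + 1)) by (field; lra).
  by apply: Rmult_lt_compat_r; lra.
rewrite /g in Hsmall; nra.
Qed.

Lemma zero_free_same_sign (g : R -> R) lo b :
  (forall x, lo < x <= b -> continuity_pt g x) ->
  (forall x, lo < x <= b -> g x <> 0) ->
  forall x, lo < x <= b -> 0 < g x * g b.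
Proof.
move=> Hcont Hzf x Hx.
have Hgb := Hzf b ltac:(lra); have Hgx := Hzf x Hx.
have [Hxb|->] := Rle_lt_or_eq_dec x b (proj2 Hx); last by nra.
have ivt : forall h, (forall z, x <= z <= b -> continuity_pt h z) ->
    h x < 0 -> 0 < h b -> exists z, x <= z <= b /\ h z = 0.
  move=> h Hh Hhx Hhb.
  by have [z Hz] := @Ranalysis5.IVT_interv h x b Hh Hxb Hhx Hhb; exists z.
have Hgc : forall z, x <= z <= b -> continuity_pt g z by move=> z Hz; apply: Hcont; lra.
have [//|Hneg] := Rlt_le_dec 0 (g x * g b); exfalso.
have [[Hx0 Hb0]|[Hx0 Hb0]] : (g x < 0 /\ 0 < g b) \/ (0 < g x /\ g b < 0).
  by have [?|?] := Rlt_le_dec (g x) 0; [left | right]; nra.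
- have [z [Hz Hgz]] := ivt g Hgc Hx0 Hb0.
  by apply: (Hzf z); [lra | exact Hgz].
- have Hoc : forall z, x <= z <= b -> continuity_pt (opp_fct g) z.
    by move=> z Hz; apply: continuity_pt_opp; exact: Hgc.
  have [z [Hz Hgz]] := ivt (opp_fct g) Hoc
    ltac:(rewrite /opp_fct; lra) ltac:(rewrite /opp_fct; lra).
  by apply: (Hzf z); [lra | rewrite /opp_fct in Hgz; lra].
Qed.

Section Escape.

Variables (f : {poly {poly int}}) (alpha b : R) (psi : R -> R).
Hypothesis Hab : alpha < b.
Hypothesis Hroot : forall x, alpha < x <= b -> peval2 f x (psi x) = 0.

Lemma escape_upward a c :
  (forall y, a <= y <= c -> peval2 f alpha y <> 0) ->
  (forall x, alpha < x <= b -> a <= psi x) ->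
  exists delta, 0 < delta /\ forall x, alpha < x < alpha + delta -> c < psi x.
Proof.
move=> Hzf Habove.
have [d [Hd Hnear]] := zero_free_neighbourhood Hzf.
exists (Rmin d (b - alpha)); split; first by apply: Rmin_glb_lt; lra.
move=> x Hx; have := Rmin_l d (b - alpha); have := Rmin_r d (b - alpha) => H1 H2.
have [//|Hle] := Rlt_le_dec c (psi x); exfalso.
apply: (Hnear x (psi x)); [lra | split; [apply: Habove | ]; lra | apply: Hroot; lra].
Qed.

Lemma escape_downward a c :
  (forall y, a <= y <= c -> peval2 f alpha y <> 0) ->
  (forall x, alpha < x <= b -> psi x <= c) ->
  exists delta, 0 < delta /\ forall x, alpha < x < alpha + delta -> psi x < a.
Proof.
move=> Hzf Hbelow.
have [d [Hd Hnear]] := zero_free_neighbourhood Hzf.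
exists (Rmin d (b - alpha)); split; first by apply: Rmin_glb_lt; lra.
move=> x Hx; have := Rmin_l d (b - alpha); have := Rmin_r d (b - alpha) => H1 H2.
have [//|Hle] := Rlt_le_dec (psi x) a; exfalso.
apply: (Hnear x (psi x)); [lra | split; [ | apply: Hbelow]; lra | apply: Hroot; lra].
Qed.

End Escape.

Section Interlacing.

Variables (m : nat) (ys tq : nat -> R).
Hypothesis Hinter : forall i, (1 <= i <= m)%nat -> tq i < ys i /\ ys i < tq (S i).

Lemma sample_monotone i k : (1 <= i)%nat -> (i <= k)%nat -> (k <= S m)%nat ->
  tq i <= tq k.
Proof.
move=> H1; elim: k => [|k IH] H2 H3; first lia.
case: (ltngtP i k.+1) => [Hlt|Hgt|->]; [ | lia | lra].
have := IH ltac:(lia) ltac:(lia); have := @Hinter k ltac:(lia); lra.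
Qed.

Lemma root_in_cell i0 i : (1 <= i0 <= m)%nat -> (1 <= i <= m)%nat ->
  tq i0 <= ys i <= tq (S i0) -> i = i0.
Proof.
move=> Hi0 Hi Hy; have := Hinter Hi => - [h1 h2].
case: (ltngtP i i0) => // Hc; exfalso.
- by have := @sample_monotone i.+1 i0 ltac:(lia) ltac:(lia) ltac:(lia); lra.
- by have := @sample_monotone i0.+1 i ltac:(lia) ltac:(lia) ltac:(lia); lra.
Qed.

Lemma root_between_extremes i : (1 <= i <= m)%nat -> tq 1 < ys i < tq (S m).
Proof.
move=> Hi; have := Hinter Hi => - [h1 h2].
have := @sample_monotone 1 i ltac:(lia) ltac:(lia) ltac:(lia).
have := @sample_monotone i.+1 m.+1 ltac:(lia) ltac:(lia) ltac:(lia).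
lra.
Qed.

End Interlacing.

Section ArcLimit.

Variables (f : {poly {poly int}}) (alpha b : R) (psi : R -> R).
Variables (m : nat) (ys tq : nat -> R).
Hypothesis Hab : alpha < b.
Hypothesis Hcont : forall x, alpha < x <= b -> continuity_pt psi x.
Hypothesis Hroot : forall x, alpha < x <= b -> peval2 f x (psi x) = 0.
Hypothesis Hys_roots : forall y, peval2 f alpha y = 0 ->
  exists i, (1 <= i <= m)%nat /\ y = ys i.
Hypothesis Hinter : forall i, (1 <= i <= m)%nat -> tq i < ys i /\ ys i < tq (S i).
Hypothesis Hsample : forall x i, alpha <= x <= b -> (1 <= i <= S m)%nat ->
  peval2 f x (tq i) <> 0.

Lemma arc_keeps_side i : (1 <= i <= S m)%nat ->
  forall x, alpha < x <= b -> 0 < (psi x - tq i) * (psi b - tq i).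
Proof.
move=> Hi; apply: (zero_free_same_sign (g := fun x => psi x - tq i)).
- move=> x Hx; apply: (continuity_pt_minus psi (fct_cte (tq i))); first exact: Hcont.
  by apply: continuity_pt_const => ? ?.
- move=> x Hx Heq; apply: (@Hsample x i) => //; first lra.
  have -> : tq i = psi x by lra.
  exact: Hroot.
Qed.

Lemma arc_limit_in_cell i0 : (1 <= i0 <= m)%nat -> tq i0 < psi b < tq (S i0) ->
  forall eps, 0 < eps -> exists delta, 0 < delta /\
    forall x, alpha < x < alpha + delta -> Rabs (psi x - ys i0) < eps.
Proof.
move=> Hi0 [Hlo Hhi] eps Heps.
have [h1 h2] := Hinter Hi0.
have Hcell : forall y, tq i0 <= y <= tq (S i0) -> y <> ys i0 -> peval2 f alpha y <> 0.
  move=> y Hy Hne Hz; have [i [Hi Hyi]] := Hys_roots Hz; subst y.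
  by apply: Hne; rewrite (root_in_cell Hinter Hi0 Hi Hy).
have [d1 [Hd1 Hup]] : exists delta, 0 < delta /\
    forall x, alpha < x < alpha + delta -> ys i0 - eps < psi x.
  apply: (escape_upward Hab Hroot (a := tq i0)).
  - by move=> y Hy; apply: Hcell; lra.
  - move=> x Hx; have := arc_keeps_side (i := i0) ltac:(lia) Hx; nra.
have [d2 [Hd2 Hdown]] : exists delta, 0 < delta /\
    forall x, alpha < x < alpha + delta -> psi x < ys i0 + eps.
  apply: (escape_downward Hab Hroot (c := tq (S i0))).
  - by move=> y Hy; apply: Hcell; lra.
  - move=> x Hx; have := arc_keeps_side (i := S i0) ltac:(lia) Hx; nra.
exists (Rmin d1 d2); split; first by apply: Rmin_glb_lt.
move=> x Hx; have := Rmin_l d1 d2; have := Rmin_r d1 d2 => H1 H2.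
by apply: Rabs_def1; [have := Hdown x ltac:(lra) | have := Hup x ltac:(lra)]; lra.
Qed.

Lemma arc_limit_minus_infinity : psi b < tq 1 ->
  forall M, exists delta, 0 < delta /\ forall x, alpha < x < alpha + delta -> psi x < M.
Proof.
move=> Hlow M.
have Hzf : forall y, Rmin M (tq 1) <= y <= tq 1 -> peval2 f alpha y <> 0.
  move=> y Hy Hz; have [i [Hi Hyi]] := Hys_roots Hz.
  by have := root_between_extremes Hinter Hi; rewrite -Hyi; lra.
have Hbelow : forall x, alpha < x <= b -> psi x <= tq 1.
  by move=> x Hx; have := arc_keeps_side (i := 1) ltac:(lia) Hx; nra.
have [d [Hd Hesc]] := escape_downward Hab Hroot Hzf Hbelow.
exists d; split; first exact: Hd.
move=> x Hx; have := Rmin_l M (tq 1); have := Hesc x Hx; lra.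
Qed.

Lemma arc_limit_plus_infinity : tq (S m) < psi b ->
  forall M, exists delta, 0 < delta /\ forall x, alpha < x < alpha + delta -> M < psi x.
Proof.
move=> Hhigh M.
have Hzf : forall y, tq (S m) <= y <= Rmax M (tq (S m)) -> peval2 f alpha y <> 0.
  move=> y Hy Hz; have [i [Hi Hyi]] := Hys_roots Hz.
  by have := root_between_extremes Hinter Hi; rewrite -Hyi; lra.
have Habove : forall x, alpha < x <= b -> tq (S m) <= psi x.
  by move=> x Hx; have := arc_keeps_side (i := S m) ltac:(lia) Hx; nra.
have [d [Hd Hesc]] := escape_upward Hab Hroot Hzf Habove.
exists d; split; first exact: Hd.
move=> x Hx; have := Rmax_l M (tq (S m)); have := Hesc x Hx; lra.
Qed.

End ArcLimit.

Lemma near_alpha_in_I (Rp : {poly int}) alpha (P : R -> Prop) :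
  (exists delta, 0 < delta /\ forall x, alpha < x < alpha + delta -> P x) ->
  exists delta, 0 < delta /\ forall x, inI Rp alpha x -> x < alpha + delta -> P x.
Proof. by case=> d [Hd HP]; exists d; split=> // x [Hx _] Hxd; apply: HP. Qed.

Theorem mainTheorem5
  (f : {poly {poly int}})
  (Hsqf : squarefreeXY f) (Hnox : no_Zx_factor f)
  (alpha : R) (Halpha : peval (resY f) alpha = 0%R)
  (* the curve arcs over I = (alpha, alpha'): phi 1 < ... < phi mI, 1-based *)
  (mI : nat) (phi : nat -> R -> R)
  (Hphi_cont : forall j x, (1 <= j <= mI)%nat -> inI (resY f) alpha x ->
      continuity_pt (phi j) x)
  (Hphi_incr : forall j x, (1 <= j)%nat -> (j < mI)%nat -> inI (resY f) alpha x ->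
      (phi j x < phi (S j) x)%R)
  (Hphi_graph : forall x y, inI (resY f) alpha x ->
      (peval2 f x y = 0%R <-> exists j, (1 <= j <= mI)%nat /\ y = phi j x))
  (* real roots y_1 < ... < y_malpha of f(alpha, y) *)
  (malpha : nat) (ys : nat -> R)
  (Hys_incr : forall i, (1 <= i)%nat -> (i < malpha)%nat -> (ys i < ys (S i))%R)
  (Hys_roots : forall y,
      peval2 f alpha y = 0%R <-> exists i, (1 <= i <= malpha)%nat /\ y = ys i)
  (* rationals t_1 < y_1 < t_2 < ... < y_malpha < t_(malpha+1) *)
  (t : nat -> Q)
  (Ht : forall i, (1 <= i <= malpha)%nat ->
      (Q2R (t i) < ys i)%R /\ (ys i < Q2R (t (S i)))%R)
  (b : Q) (HbI : inI (resY f) alpha (Q2R b))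
  (Hb : forall x i, (alpha <= x <= Q2R b)%R -> (1 <= i <= S malpha)%nat ->
      peval2 f x (Q2R (t i)) <> 0%R) :
  forall j, (1 <= j <= mI)%nat ->
    (forall i0, (1 <= i0 <= malpha)%nat ->
       (Q2R (t i0) < phi j (Q2R b) < Q2R (t (S i0)))%R ->
       forall eps, (0 < eps)%R -> exists delta, (0 < delta)%R /\
         forall x, inI (resY f) alpha x -> (x < alpha + delta)%R ->
           (Rabs (phi j x - ys i0) < eps)%R)
    /\ ((phi j (Q2R b) < Q2R (t 1%nat))%R ->
       forall M, exists delta, (0 < delta)%R /\
         forall x, inI (resY f) alpha x -> (x < alpha + delta)%R -> (phi j x < M)%R)
    /\ ((Q2R (t (S malpha)) < phi j (Q2R b))%R ->
       forall M, exists delta, (0 < delta)%R /\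
         forall x, inI (resY f) alpha x -> (x < alpha + delta)%R -> (M < phi j x)%R).
Proof.
move=> j Hj.
have Hab : alpha < Q2R b := proj1 HbI.
have HinI : forall x, alpha < x <= Q2R b -> inI (resY f) alpha x.
  by move=> x Hx; split=> [|r Hr]; [lra | apply: (proj2 HbI); lra].
have Hcont : forall x, alpha < x <= Q2R b -> continuity_pt (phi j) x.
  by move=> x Hx; apply: Hphi_cont => //; exact: HinI.
have Hroot : forall x, alpha < x <= Q2R b -> peval2 f x (phi j x) = 0.
  by move=> x Hx; apply/(Hphi_graph x (phi j x) (HinI x Hx)); exists j.
have Hroots : forall y, peval2 f alpha y = 0 ->
    exists i, (1 <= i <= malpha)%nat /\ y = ys i.
  by move=> y; apply: (proj1 (Hys_roots y)).
split; [|split].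
- move=> i0 Hi0 Hcell eps Heps; apply: near_alpha_in_I.
  exact: (arc_limit_in_cell Hab Hcont Hroot Hroots Ht Hb Hi0 Hcell Heps).
- move=> Hlow M; apply: near_alpha_in_I.
  exact: (arc_limit_minus_infinity Hab Hcont Hroot Hroots Ht Hb Hlow).
- move=> Hhigh M; apply: near_alpha_in_I.
  exact: (arc_limit_plus_infinity Hab Hcont Hroot Hroots Ht Hb Hhigh).
Qed.
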